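(* Let $(G,\sigma)$, $(A,\pi_A)$, $(B,\pi_B)$ be connected signed graphs with $G=A\,\square\,B$ (so $V(G)=V(A)\times V(B)$). Then $\sigma$ is equivalent to the signature of $(A,\pi_A)\,\square\,(B,\pi_B)$ if and only if all three of the following hold: (1) every $A$-layer of $(G,\sigma)$, identified with $A$ via the projection, carries a signature equivalent to $\pi_A$; (2) at least one $B$-layer of $(G,\sigma)$, identified with $B$ via the projection, carries a signature equivalent to $\pi_B$; (3) for every edge $e$ of $A$ and every pair of distinct copies $e_1,e_2$ of $e$ in $G$, if $e_1$ and $e_2$ lie on a common $4$-cycle of $G$, then this $4$-cycle is balanced in $(G,\sigma)$.
   Context: A signed graph $(G,\sigma)$ is a simple loopless undirected graph $G$ with a signature $\sigma:E(G)\to\{+1,-1\}$. Switching a vertex negates the signs of its incident edges; two signatures of the same graph are equivalent if one is obtained from the other by switching a set of vertices. A cycle is balanced if the product of the signs of its edges is $+1$. The Cartesian product $(A,\pi_A)\,\square\,(B,\pi_B)$ is the signed graph on $A\,\square\,B$ where $(a,b_1)(a,b_2)$ has sign $\pi_B(b_1b_2)$ and $(a_1,b)(a_2,b)$ has sign $\pi_A(a_1a_2)$. For $b\in V(B)$, the $A$-layer at $b$ is the subgraph of $G$ induced by $V(A)\times\{b\}$; $B$-layers are defined symmetrically. A copy of an edge $a_1a_2$ of $A$ is an edge $(a_1,b)(a_2,b)$ of $G$ for some $b\in V(B)$. *)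

From mathcomp Require Import all_boot.
Set Implicit Arguments. Unset Strict Implicit. Unset Printing Implicit Defensive.

Definition simple_graph (T : finType) (e : rel T) : Prop :=
  symmetric e /\ irreflexive e.

Definition connected (T : finType) (e : rel T) : Prop :=
  (exists x : T, True) /\ forall x y : T, connect e x y.

(* A signature is encoded as a symmetric function on vertex pairs;
   [true] means sign -1, [false] means sign +1.  Only values on edges matter. *)
Definition sym_sig (T : finType) (s : T -> T -> bool) : Prop :=
  forall x y, s x y = s y x.

Definition sw_equiv (T : finType) (e : rel T) (s1 s2 : T -> T -> bool) : Prop :=
  exists S : {set T}, forall x y, e x y ->
    s2 x y = s1 x y (+) (x \in S) (+) (y \in S).

Definition cart_rel (A B : finType) (eA : rel A) (eB : rel B) : rel (A * B) :=
  fun u v => ((u.1 == v.1) && eB u.2 v.2) || ((u.2 == v.2) && eA u.1 v.1).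

Definition cart_sig (A B : finType) (pA : A -> A -> bool) (pB : B -> B -> bool)
  : A * B -> A * B -> bool :=
  fun u v => if u.1 == v.1 then pB u.2 v.2 else pA u.1 v.1.

Definition is_4cycle (T : finType) (e : rel T) (v0 v1 v2 v3 : T) : bool :=
  [&& uniq [:: v0; v1; v2; v3], e v0 v1, e v1 v2, e v2 v3 & e v3 v0].

Definition edge_on_4cycle (T : finType) (x y v0 v1 v2 v3 : T) : bool :=
  [|| [set x; y] == [set v0; v1], [set x; y] == [set v1; v2],
      [set x; y] == [set v2; v3] | [set x; y] == [set v3; v0]].

Definition balanced4 (T : finType) (s : T -> T -> bool) (v0 v1 v2 v3 : T) : bool :=
  ~~ (s v0 v1 (+) s v1 v2 (+) s v2 v3 (+) s v3 v0).

From mathcomp Require Import all_boot.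
Set Implicit Arguments. Unset Strict Implicit.

(* Necessity: a switching of G restricts to switchings of its layers, balance
   of a 4-cycle is invariant under switching, and a square e x f is balanced in
   the product signature.  Sufficiency: switch every A-layer to piA and the
   B-layer at a0 to piB, glued into one switching of G that agrees with both.
   The balance of the squares e x f then makes the sign of the copy of an edge f
   of B constant along the edges of A, so by connectivity of A it is the sign
   piB f seen on the layer at a0. *)

Lemma irreflexive_neq (T : finType) (e : rel T) :
  irreflexive e -> forall x y, e x y -> x != y.
Proof. by move=> irr_e x y; apply: contraTneq => ->; rewrite irr_e. Qed.

Definition switch (T : finType) (s : T -> T -> bool) (S : {set T}) : T -> T -> bool :=
  fun x y => s x y (+) (x \in S) (+) (y \in S).

Lemma sym_sig_switch (T : finType) (s : T -> T -> bool) (S : {set T}) :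
  sym_sig s -> sym_sig (switch s S).
Proof. by move=> ss x y; rewrite /switch ss addbAC. Qed.

Lemma balanced4_switch (T : finType) (s : T -> T -> bool) (S : {set T}) v0 v1 v2 v3 :
  balanced4 (switch s S) v0 v1 v2 v3 = balanced4 s v0 v1 v2 v3.
Proof.
rewrite /balanced4 /switch.
by case: (v0 \in S); case: (v1 \in S); case: (v2 \in S); case: (v3 \in S);
  case: (s v0 v1); case: (s v1 v2); case: (s v2 v3); case: (s v3 v0).
Qed.

Lemma balanced4_sw_equiv (T : finType) (e : rel T) (s1 s2 : T -> T -> bool) v0 v1 v2 v3 :
  sw_equiv e s1 s2 -> is_4cycle e v0 v1 v2 v3 ->
  balanced4 s2 v0 v1 v2 v3 = balanced4 s1 v0 v1 v2 v3.
Proof.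
case=> S s2E /and5P[_ e01 e12 e23 e30].
by rewrite -(balanced4_switch s1 S) /balanced4 (s2E _ _ e01) (s2E _ _ e12)
  (s2E _ _ e23) (s2E _ _ e30).
Qed.

Lemma sw_equiv_pullback (T U : finType) (eT : rel T) (eU : rel U) (f : U -> T)
    (s1 s2 : T -> T -> bool) (t2 : U -> U -> bool) :
  {homo f : x y / eU x y >-> eT x y} ->
  (forall x y, eU x y -> s2 (f x) (f y) = t2 x y) ->
  sw_equiv eT s1 s2 -> sw_equiv eU (fun x y => s1 (f x) (f y)) t2.
Proof.
move=> f_homo t2E [S s2E]; exists (f @^-1: S) => x y exy.
by rewrite -t2E // s2E ?f_homo // !inE.
Qed.

(* A cycle crosses the cut defined by f an even number of times. *)
Lemma balanced4_cut (T : finType) (e : rel T) (s : T -> T -> bool) (V : {pred T})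
    (f : T -> bool) (p q : bool) v0 v1 v2 v3 :
  {in V &, forall x y, e x y -> s x y = if f x == f y then q else p} ->
  {subset [:: v0; v1; v2; v3] <= V} ->
  is_4cycle e v0 v1 v2 v3 -> balanced4 s v0 v1 v2 v3.
Proof.
move=> sE sub /and5P[_ e01 e12 e23 e30].
rewrite /balanced4 !sE ?sub ?inE ?eqxx ?orbT //; clear sE sub.
by case: (f v0); case: (f v1); case: (f v2); case: (f v3); case: p; case: q.
Qed.

Lemma balanced4_opposite (T : finType) (s : T -> T -> bool) v0 v1 v2 v3 :
  sym_sig s -> balanced4 s v0 v1 v2 v3 -> s v0 v1 = s v3 v2 -> s v1 v2 = s v0 v3.
Proof.
rewrite /balanced4 => ss + s01E; rewrite s01E (ss v2 v3) (ss v3 v0).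
by case: (s v3 v2); case: (s v1 v2); case: (s v0 v3).
Qed.

Lemma edge_on_4cycle_subset (T : finType) (x y v0 v1 v2 v3 : T) :
  edge_on_4cycle x y v0 v1 v2 v3 -> [set x; y] \subset [set z in [:: v0; v1; v2; v3]].
Proof.
case/or4P=> /eqP xyE; apply/subsetP => z; rewrite xyE !inE;
  by case/orP=> /eqP->; rewrite eqxx ?orbT.
Qed.

Section CartesianProduct.

Variables (A B : finType) (eA : rel A) (eB : rel B).
Hypotheses (sym_eA : symmetric eA) (irr_eA : irreflexive eA).
Hypotheses (sym_eB : symmetric eB) (irr_eB : irreflexive eB).

Local Notation G := (cart_rel eA eB).

Lemma cart_rel_layerA b : {homo (fun a => (a, b)) : x y / eA x y >-> G x y}.
Proof. by move=> x y exy; rewrite /cart_rel /= eqxx exy orbT. Qed.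

Lemma cart_rel_layerB a : {homo pair a : x y / eB x y >-> G x y}.
Proof. by move=> x y exy; rewrite /cart_rel /= eqxx exy. Qed.

Lemma cart_square a a' b b' : eA a a' -> eB b b' ->
  is_4cycle G (a, b) (a', b) (a', b') (a, b').
Proof.
move=> eaa' ebb'.
have na := irreflexive_neq irr_eA eaa'; have nb := irreflexive_neq irr_eB ebb'.
rewrite /is_4cycle /cart_rel /= !inE -!pair_eqE /= !eqxx.
rewrite (eq_sym a') (negbTE na) (negbTE nb) (sym_eA a') (sym_eB b') eaa' ebb'.
by rewrite !andbF !orbT.
Qed.

Lemma square_4cycle_vertices (a1 a2 : A) (b b' : B) v0 v1 v2 v3 :
  a1 != a2 -> b != b' ->
  edge_on_4cycle (a1, b) (a2, b) v0 v1 v2 v3 ->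
  edge_on_4cycle (a1, b') (a2, b') v0 v1 v2 v3 ->
  {subset [:: v0; v1; v2; v3] <= setX [set a1; a2] [set b; b']}.
Proof.
move=> na nb /edge_on_4cycle_subset sub /edge_on_4cycle_subset sub'.
set V := [set z in _] in sub sub'.
have squareE : setX [set a1; a2] [set b; b'] =
    [set (a1, b); (a2, b)] :|: [set (a1, b'); (a2, b')].
  apply/setP=> -[x y]; rewrite !inE -!pair_eqE /=.
  by case: (x == a1); case: (x == a2); case: (y == b); case: (y == b').
have sub_square : setX [set a1; a2] [set b; b'] \subset V by rewrite squareE subUset sub.
have cardV : #|V| <= 4 by rewrite cardsE (card_size [:: v0; v1; v2; v3]).
have card_square : #|setX [set a1; a2] [set b; b']| = #|V|.
  by apply/eqP; rewrite eqn_leq subset_leq_card // cardsX !cards2 na nb.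
by move=> z zV; rewrite (subset_cardP card_square sub_square) inE.
Qed.

Variables (piA : A -> A -> bool) (piB : B -> B -> bool).
Hypotheses (sym_piA : sym_sig piA) (sym_piB : sym_sig piB).

Lemma cart_sig_square (a1 a2 : A) (b b' : B) : a1 != a2 -> b != b' ->
  {in setX [set a1; a2] [set b; b'] &, forall u v, G u v ->
    cart_sig piA piB u v = if (u.1 == a1) == (v.1 == a1) then piB b b' else piA a1 a2}.
Proof.
move=> na nb [x y] [x' y']; rewrite /cart_rel /cart_sig !inE /=.
have na' := negbTE na; have nb' := negbTE nb; rewrite eq_sym in na nb.
move=> /andP[/orP[]/eqP-> /orP[]/eqP->] /andP[/orP[]/eqP-> /orP[]/eqP->];
  by rewrite ?eqxx ?na' ?nb' ?(negbTE na) ?(negbTE nb) ?irr_eA ?irr_eB //=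
    ?sym_piA ?sym_piB.
Qed.

Lemma cart_sig_balanced (a1 a2 : A) (b b' : B) v0 v1 v2 v3 : eA a1 a2 -> b != b' ->
  is_4cycle G v0 v1 v2 v3 ->
  edge_on_4cycle (a1, b) (a2, b) v0 v1 v2 v3 ->
  edge_on_4cycle (a1, b') (a2, b') v0 v1 v2 v3 ->
  balanced4 (cart_sig piA piB) v0 v1 v2 v3.
Proof.
move=> e12 nb cycle_v on_b on_b'.
have na := irreflexive_neq irr_eA e12.
exact: balanced4_cut (cart_sig_square na nb)
  (square_4cycle_vertices na nb on_b on_b') cycle_v.
Qed.

(* R b switches the A-layer at b and T0 the B-layer at a0; each R b is
   complemented where needed to agree with T0 at (a0, b). *)
Definition layer_glue (R : B -> {set A}) (T0 : {set B}) (a0 : A) : {set A * B} :=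
  [set u | (u.1 \in R u.2) (+) (a0 \in R u.2) (+) (u.2 \in T0)].

Section LayerGlue.

Variables (sigma : A * B -> A * B -> bool) (R : B -> {set A}) (T0 : {set B}) (a0 : A).

Lemma switch_layer_glueA b :
  (forall x y, eA x y -> piA x y = switch (fun x y => sigma (x, b) (y, b)) (R b) x y) ->
  forall x y, eA x y -> switch sigma (layer_glue R T0 a0) (x, b) (y, b) = piA x y.
Proof.
move=> piAE x y exy; rewrite piAE // /switch !inE /=.
by case: (x \in R b); case: (y \in R b); case: (a0 \in R b); case: (b \in T0);
  case: (sigma (x, b) (y, b)).
Qed.

Lemma switch_layer_glueB :
  (forall b b', eB b b' -> piB b b' = switch (fun b b' => sigma (a0, b) (a0, b')) T0 b b') ->
  forall b b', eB b b' -> switch sigma (layer_glue R T0 a0) (a0, b) (a0, b') = piB b b'.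
Proof.
move=> piBE b b' ebb'; rewrite piBE // /switch !inE /=.
by case: (a0 \in R b); case: (a0 \in R b'); case: (b \in T0); case: (b' \in T0);
  case: (sigma (a0, b) (a0, b')).
Qed.

End LayerGlue.

Lemma sw_equiv_cart_sig_of_layers (sigma : A * B -> A * B -> bool) (a0 : A) :
  (forall a, connect eA a0 a) -> sym_sig sigma ->
  (forall b, sw_equiv eA (fun x y => sigma (x, b) (y, b)) piA) ->
  sw_equiv eB (fun b b' => sigma (a0, b) (a0, b')) piB ->
  (forall a a' b b', eA a a' -> eB b b' -> balanced4 sigma (a, b) (a', b) (a', b') (a, b')) ->
  sw_equiv G sigma (cart_sig piA piB).
Proof.
move=> conn_a0 sym_sigma /fin_all_exists[R piAE] [T0 piBE] square_bal.
pose tau := switch sigma (layer_glue R T0 a0).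
have tauA b := switch_layer_glueA T0 a0 (piAE b).
have tauB a b b' : eB b b' -> tau (a, b) (a, b') = piB b b'.
  move=> ebb'; rewrite -(switch_layer_glueB R piBE ebb'); apply/eqP.
  have closed_tau : closed eA [pred x | tau (x, b) (x, b') == tau (a0, b) (a0, b')].
    move=> x x' exx'.
    rewrite !inE (@balanced4_opposite _ tau (x, b) (x', b) (x', b') (x, b')) //.
    - exact: sym_sig_switch.
    - by rewrite balanced4_switch square_bal.
    - by rewrite /tau !tauA.
  by have := closed_connect closed_tau (conn_a0 a); rewrite !inE eqxx => /esym.
exists (layer_glue R T0 a0) => -[x y] [x' y'] uv.
change (cart_sig piA piB (x, y) (x', y') = tau (x, y) (x', y')).
move: uv; rewrite /cart_rel /cart_sig /= => /orP[] /andP[/eqP <- e].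
- by rewrite eqxx tauB.
- by rewrite (negbTE (irreflexive_neq irr_eA e)) /tau tauA.
Qed.

Lemma sw_equiv_layerA (sigma : A * B -> A * B -> bool) (b : B) :
  sw_equiv G sigma (cart_sig piA piB) -> sw_equiv eA (fun x y => sigma (x, b) (y, b)) piA.
Proof.
apply: sw_equiv_pullback (@cart_rel_layerA b) _ => x y exy.
by rewrite /cart_sig /= (negbTE (irreflexive_neq irr_eA exy)).
Qed.

Lemma sw_equiv_layerB (sigma : A * B -> A * B -> bool) (a : A) :
  sw_equiv G sigma (cart_sig piA piB) -> sw_equiv eB (fun x y => sigma (a, x) (a, y)) piB.
Proof.
by apply: sw_equiv_pullback (@cart_rel_layerB a) _ => x y _; rewrite /cart_sig /= eqxx.
Qed.

End CartesianProduct.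

Theorem lemma4p8 (A B : finType) (eA : rel A) (eB : rel B)
    (piA : A -> A -> bool) (piB : B -> B -> bool) (sigma : A * B -> A * B -> bool) :
  simple_graph eA -> simple_graph eB ->
  connected eA -> connected eB -> connected (cart_rel eA eB) ->
  sym_sig piA -> sym_sig piB -> sym_sig sigma ->
  (sw_equiv (cart_rel eA eB) sigma (cart_sig piA piB) <->
   [/\ (forall b : B, sw_equiv eA (fun a1 a2 => sigma (a1, b) (a2, b)) piA),
       (exists a : A, sw_equiv eB (fun b1 b2 => sigma (a, b1) (a, b2)) piB) &
       (forall (a1 a2 : A) (b b' : B), eA a1 a2 -> b != b' ->
        forall v0 v1 v2 v3 : A * B,
          is_4cycle (cart_rel eA eB) v0 v1 v2 v3 ->
          edge_on_4cycle (a1, b) (a2, b) v0 v1 v2 v3 ->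
          edge_on_4cycle (a1, b') (a2, b') v0 v1 v2 v3 ->
          balanced4 sigma v0 v1 v2 v3)]).
Proof.
move=> [sym_eA irr_eA] [sym_eB irr_eB] [[a0 _] conn_A] _ _ sym_piA sym_piB sym_sigma.
split=> [equiv | [layersA [a1 layerB] squares]].
- split=> [b | | a1 a2 b b' e12 nb v0 v1 v2 v3 cycle_v on_b on_b'].
  + exact: (sw_equiv_layerA irr_eA b equiv).
  + by exists a0; apply: (sw_equiv_layerB a0 equiv).
  + rewrite -(balanced4_sw_equiv equiv cycle_v).
    exact: cart_sig_balanced on_b on_b'.
- apply: (sw_equiv_cart_sig_of_layers irr_eA (a0 := a1)) => // a a' b b' eaa' ebb'.
  apply: (squares a a' b b' eaa' (irreflexive_neq irr_eB ebb')).
  + exact: cart_square.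
  + by apply/or4P/Or41.
  + by apply/or4P/Or43/eqP/setUC.
Qed.
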